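(* Let $\mathbb{K}$ be a field, $S=\mathbb{K}[x_1,\dots,x_n]$ standard graded, and $\Delta$ a $1$-dimensional simplicial complex on $[n]$ with $\{i\}\in\Delta$ for all $i\in[n]$, labelled so that $\operatorname{link}_\Delta 1=\{2,\dots,r\}$ (as a set of vertices). Let $\tau$ be a monomial order with $x_1>x_i$ for all $i>1$ and $x_2>x_3>\dots>x_r$. Let $I\subset S$ be a homogeneous ideal with $\operatorname{in}_\tau(I)=I_\Delta$, and let $\{f_F : F \text{ a minimal non-face of }\Delta\}$ be a reduced homogeneous Gröbner basis of $I$ with $\operatorname{in}_\tau(f_F)=\mathbf{x}_F$; write $d_F=\deg f_F$. Then for every $a$ with $1<a\le\min\{r,3\}$ and every minimal non-face $F$ with $1\notin F$, the monomial $x_1^{d_F-1}x_a$ does not belong to the support of $f_F$.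
   Context: For $F\subseteq[n]$, $\mathbf{x}_F=\prod_{i\in F}x_i$. $I_\Delta=(\mathbf{x}_F: F\notin\Delta)$. A minimal non-face is a subset $F\subseteq[n]$ with $F\notin\Delta$ but all proper subsets in $\Delta$; since $\Delta$ is $1$-dimensional with all vertices, $d_F\in\{2,3\}$. $\operatorname{link}_\Delta 1=\{G: G\cup\{1\}\in\Delta, 1\notin G\}$. A reduced Gröbner basis has monic elements and no monomial in the support of $f_F$ other than $\mathbf{x}_F$ lies in $\operatorname{in}_\tau(I)$. The support $\operatorname{supp} f$ is the set of monomials with nonzero coefficient in $f$. *)

From HB Require Import structures.
From mathcomp Require Import all_boot all_order all_algebra.
Set Implicit Arguments. Unset Strict Implicit. Unset Printing Implicit Defensive.
Import GRing.Theory.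
Local Open Scope ring_scope.

(** Polynomial ring K[x_0,...,x_{n-1}] as iterated univariate polynomials.
    The outermost polynomial variable is x_0. *)
Fixpoint mpoly (K : fieldType) (n : nat) : comNzRingType :=
  match n with
  | 0 => K
  | m.+1 => ({poly mpoly K m} : comNzRingType)
  end.

Definition mon (n : nat) := n.-tuple nat.

(** Coefficient of the monomial with exponent sequence s (head = exponent of
    the outermost variable x_0). *)
Fixpoint mcoef_seq (K : fieldType) (n : nat) : mpoly K n -> seq nat -> K :=
  match n return mpoly K n -> seq nat -> K with
  | 0 => fun p _ => p
  | m.+1 => fun (p : {poly mpoly K m}) s => mcoef_seq (p`_(head 0%N s)) (behead s)
  end.

Definition mcoef (K : fieldType) (n : nat) (p : mpoly K n) (m : mon n) : K :=
  mcoef_seq p (tval m).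

Definition in_supp (K : fieldType) (n : nat) (p : mpoly K n) (m : mon n) : Prop :=
  mcoef p m != 0.

Definition madd (n : nat) (a b : mon n) : mon n := [tuple (tnth a i + tnth b i)%N | i < n].
Definition mzero (n : nat) : mon n := [tuple 0%N | i < n].
Definition mdvd (n : nat) (a b : mon n) : bool := [forall i, tnth a i <= tnth b i]%N.
Definition mtdeg (n : nat) (a : mon n) : nat := (\sum_(i < n) tnth a i)%N.
Definition mvar (n : nat) (i : 'I_n) : mon n := [tuple (i == j : nat) | j < n].
Definition mset (n : nat) (F : {set 'I_n}) : mon n := [tuple (j \in F : nat) | j < n].

Definition monomial_order (n : nat) (lt : rel (mon n)) : Prop :=
  [/\ irreflexive lt,
      transitive lt,
      (forall a b, a != b -> lt a b || lt b a),
      (forall a b c, lt a b -> lt (madd a c) (madd b c))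
    & well_founded (fun a b => lt a b)].

Definition is_ideal (K : fieldType) (n : nat) (I : mpoly K n -> Prop) : Prop :=
  [/\ I 0,
      (forall f g, I f -> I g -> I (f + g))
    & (forall r f, I f -> I (r * f))].

Definition homogeneous (K : fieldType) (n : nat) (d : nat) (f : mpoly K n) : Prop :=
  forall m : mon n, in_supp f m -> mtdeg m = d.

Definition homogeneous_ideal (K : fieldType) (n : nat) (I : mpoly K n -> Prop) : Prop :=
  is_ideal I /\
  exists G : mpoly K n -> Prop,
    (forall g, G g -> I g /\ exists d, homogeneous d g) /\
    (forall J : mpoly K n -> Prop, is_ideal J -> (forall g, G g -> J g) ->
        forall f, I f -> J f).

Definition lead_mon (K : fieldType) (n : nat) (lt : rel (mon n)) (f : mpoly K n) (m : mon n)
  : Prop :=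
  in_supp f m /\ forall m', in_supp f m' -> m' = m \/ lt m' m.

Definition mono_ideal (K : fieldType) (n : nat) (G : mon n -> Prop) (p : mpoly K n) : Prop :=
  forall m, in_supp p m -> exists2 g, G g & mdvd g m.

Fixpoint mmono_seq (K : fieldType) (n : nat) : seq nat -> mpoly K n :=
  match n return seq nat -> mpoly K n with
  | 0 => fun _ => 1
  | m.+1 => fun s => ((mmono_seq K m (behead s))%:P * 'X^(head 0%N s) : {poly mpoly K m})
  end.
Definition mmono (K : fieldType) (n : nat) (m : mon n) : mpoly K n := mmono_seq K n (tval m).

Definition init_ideal (K : fieldType) (n : nat) (lt : rel (mon n)) (I : mpoly K n -> Prop)
  : mpoly K n -> Prop :=
  mono_ideal (fun m => exists2 f, I f /\ f != 0 & lead_mon lt f m).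

(** Simplicial complexes on the vertex set 'I_n (vertex i stands for i+1). *)
Definition simplicial_complex (n : nat) (D : {set {set 'I_n}}) : Prop :=
  set0 \in D /\ forall F G : {set 'I_n}, F \in D -> G \subset F -> G \in D.

Definition all_vertices (n : nat) (D : {set {set 'I_n}}) : Prop :=
  forall i : 'I_n, [set i] \in D.

Definition one_dimensional (n : nat) (D : {set {set 'I_n}}) : Prop :=
  (forall F : {set 'I_n}, F \in D -> #|F| <= 2)%N /\ exists2 F, F \in D & #|F| = 2%N.

Definition min_nonface (n : nat) (D : {set {set 'I_n}}) (F : {set 'I_n}) : Prop :=
  F \notin D /\ forall G : {set 'I_n}, G \proper F -> G \in D.

Definition link (n : nat) (D : {set {set 'I_n}}) (v : 'I_n) : {set {set 'I_n}} :=
  [set G in D | (v |: G \in D) && (v \notin G)].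

Definition SR_ideal (K : fieldType) (n : nat) (D : {set {set 'I_n}}) : mpoly K n -> Prop :=
  mono_ideal (fun m => exists2 F, F \notin D & m = mset F).

(* Suppose x_1^(d_F - 1) x_a lies in the support of f_F for some minimal nonface F
   avoiding 1, and take F with x_F x_1^(n - |F|) minimal for tau.  Then a is not in F
   and some b in F lies outside the link of 1 (otherwise x_F would be smaller than
   that monomial of its own support), so {1, b} is a minimal nonface and the S-polynomial
   x_1 f_F - x_(F \ b) f_{1,b} is an element of I whose support contains x_1^d x_a.
   Reducing it by the Groebner basis must eventually cancel x_1^d x_a.  Monomials of
   x_1-degree at least d in the support stay standard, so x_1^d x_a is never the
   leading monomial; it can only be cancelled by a reducer x^w f_G with
   x_1^(|G| - 1) x_a in the support of f_G, and the order constraints then force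
   1 not in G and x_G x_1^(n - |G|) < x_F x_1^(n - |F|), contradicting minimality. *)

From HB Require Import structures.
From mathcomp Require Import all_boot all_order all_algebra zify.
Import GRing.Theory.
Local Open Scope ring_scope.
Set Implicit Arguments. Unset Strict Implicit. Unset Printing Implicit Defensive.

Section IteratedPolynomials.
Variable K : fieldType.

(* Exponents are functions [nat -> nat] rather than tuples, so that peeling off the
   outermost variable is a plain recursive call. *)

Fixpoint mcoef_fn (n : nat) : mpoly K n -> (nat -> nat) -> K :=
  match n return mpoly K n -> (nat -> nat) -> K with
  | 0 => fun p _ => p
  | m.+1 => fun (p : {poly mpoly K m}) e => mcoef_fn (p`_(e 0%N)) (fun i => e i.+1)
  end.

Fixpoint mmono_fn (n : nat) : (nat -> nat) -> mpoly K n :=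
  match n return (nat -> nat) -> mpoly K n with
  | 0 => fun _ => 1
  | m.+1 => fun e => ((mmono_fn m (fun i => e i.+1))%:P * 'X^(e 0%N) : {poly mpoly K m})
  end.

Fixpoint mconst (n : nat) (c : K) : mpoly K n :=
  match n return mpoly K n with
  | 0 => c
  | m.+1 => ((mconst m c)%:P : {poly mpoly K m})
  end.

Definition fn_dvd n (t e : nat -> nat) := all (fun i => t i <= e i)%N (iota 0 n).

Lemma mcoef_fn_ext n (p : mpoly K n) e e' :
  (forall i, (i < n)%N -> e i = e' i) -> mcoef_fn p e = mcoef_fn p e'.
Proof.
elim: n p e e' => [|n IH] p e e' eq_e //=.
by rewrite (eq_e 0%N) //; apply: IH => i lt_in; apply: eq_e.
Qed.

Lemma mmono_fn_ext n e e' : e =1 e' -> mmono_fn n e = mmono_fn n e'.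
Proof.
by elim: n e e' => [|n IH] e e' eq_e //=; rewrite eq_e (IH _ (fun i => e' i.+1)).
Qed.

Lemma mcoef_seqE n (p : mpoly K n) s : mcoef_seq p s = mcoef_fn p (nth 0%N s).
Proof.
elim: n p s => [|n IH] p s //=.
by rewrite IH; case: s => [|x s] /=; apply: mcoef_fn_ext => i _ //=; rewrite !nth_nil.
Qed.

Lemma mmono_seqE n s : mmono_seq K n s = mmono_fn n (nth 0%N s).
Proof.
elim: n s => [|n IH] s //=; rewrite IH; case: s => [|x s] //=.
by congr (_%:P * _); apply: mmono_fn_ext => i; rewrite !nth_nil.
Qed.

Lemma mcoef_fnD n (p q : mpoly K n) e :
  mcoef_fn (p + q) e = mcoef_fn p e + mcoef_fn q e.
Proof. by elim: n p q e => [|n IH] p q e //=; rewrite coefD IH. Qed.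

Lemma mcoef_fnN n (p : mpoly K n) e : mcoef_fn (- p) e = - mcoef_fn p e.
Proof. by elim: n p e => [|n IH] p e //=; rewrite coefN IH. Qed.

Lemma mcoef_fn0 n e : mcoef_fn (0 : mpoly K n) e = 0.
Proof. by elim: n e => [|n IH] e //=; rewrite coef0 IH. Qed.

Lemma mcoef_fn1 n e :
  mcoef_fn (1 : mpoly K n) e = if all (fun i => e i == 0)%N (iota 0 n) then 1 else 0.
Proof.
elim: n e => [|n IH] e //=; rewrite coef1; case: eqP => _ /=.
  by rewrite IH -(addn0 1%N) iotaDl all_map.
by rewrite mulr0n mcoef_fn0.
Qed.

Lemma mcoef_fn_mconstM n c (p : mpoly K n) e :
  mcoef_fn (mconst n c * p) e = c * mcoef_fn p e.
Proof. by elim: n p e => [|n IH] p e //=; rewrite coefCM IH. Qed.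

Lemma mcoef_fn_mmonoM n t (p : mpoly K n) e :
  mcoef_fn (mmono_fn n t * p) e =
  if fn_dvd n t e then mcoef_fn p (fun i => e i - t i)%N else 0.
Proof.
elim: n t p e => [|n IH] t p e /=; first by rewrite mul1r.
rewrite -mulrA coefCM coefXnM /fn_dvd /=.
case: ltnP => _; first by rewrite mulr0 mcoef_fn0.
by rewrite IH /fn_dvd -(addn0 1%N) iotaDl all_map.
Qed.

Fixpoint msupp_seq (n : nat) : mpoly K n -> seq (seq nat) :=
  match n return mpoly K n -> seq (seq nat) with
  | 0 => fun _ => [:: [::]]
  | m.+1 => fun (p : {poly mpoly K m}) =>
      flatten [seq [seq i :: s | s <- msupp_seq (p`_i)] | i <- iota 0 (size p)]
  end.

Lemma msupp_seqP n (p : mpoly K n) e : mcoef_fn p e != 0 ->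
  exists2 s, s \in msupp_seq p & forall i, (i < n)%N -> nth 0%N s i = e i.
Proof.
elim: n p e => [|n IH] p e /=; first by exists [::].
move=> nz_pe; have [s s_supp eq_s] := IH _ _ nz_pe.
exists (e 0%N :: s); last by case=> [|i] //= /eq_s.
apply/flattenP; exists [seq e 0%N :: s0 | s0 <- msupp_seq p`_(e 0%N)]; last exact: map_f.
apply/mapP; exists (e 0%N) => //; rewrite mem_iota add0n ltnNge.
by apply: contra nz_pe => le_p; rewrite nth_default // mcoef_fn0.
Qed.

End IteratedPolynomials.

Ltac mon_eq := apply: eq_from_tnth => ?; rewrite ?tnth_mktuple.

Section Monomials.
Variable n : nat.
Implicit Types (x y z w : mon n) (G : {set 'I_n}).

Definition msub x y : mon n := [tuple (tnth x i - tnth y i)%N | i < n].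

Lemma maddC x y : madd x y = madd y x.
Proof. by mon_eq; rewrite addnC. Qed.

Lemma maddA x y z : madd x (madd y z) = madd (madd x y) z.
Proof. by mon_eq; rewrite addnA. Qed.

Lemma mdvdP x y : reflect (forall i, tnth x i <= tnth y i)%N (mdvd x y).
Proof. exact: forallP. Qed.

Lemma mdvd_maddr x y : mdvd x (madd x y).
Proof. by apply/mdvdP => i; rewrite tnth_mktuple leq_addr. Qed.

Lemma msub_mdvd x y : mdvd (msub x y) x.
Proof. by apply/mdvdP => i; rewrite tnth_mktuple leq_subr. Qed.

Lemma msubK x y : mdvd x y -> madd x (msub y x) = y.
Proof. by move/mdvdP => le_xy; mon_eq; rewrite subnKC. Qed.

Lemma maddKm x y : msub (madd x y) x = y.
Proof. by mon_eq; rewrite addKn. Qed.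

Lemma mvar_mdvd (j : 'I_n) x : (0 < tnth x j)%N -> mdvd (mvar j) x.
Proof. by move=> pos_j; apply/mdvdP => i; rewrite tnth_mktuple; case: eqP => // <-. Qed.

Lemma mset_D1 G (x : 'I_n) : x \in G -> mset G = madd (mvar x) (mset (G :\ x)).
Proof.
by move=> Gx; mon_eq; rewrite in_setD1; case: eqVneq => [<-|] /=; rewrite ?Gx.
Qed.

Lemma mtdegD x y : mtdeg (madd x y) = (mtdeg x + mtdeg y)%N.
Proof. by rewrite /mtdeg -big_split; apply: eq_bigr => i _; rewrite tnth_mktuple. Qed.

Lemma mtdeg_msub x y : mdvd y x -> mtdeg (msub x y) = (mtdeg x - mtdeg y)%N.
Proof. by move=> dvd_yx; rewrite -{2}(msubK dvd_yx) mtdegD addKn. Qed.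

Lemma mtdeg_mset G : mtdeg (mset G) = #|G|.
Proof.
rewrite /mtdeg -sum1_card [RHS]big_mkcond /=.
by apply: eq_bigr => i _; rewrite tnth_mktuple; case: (i \in G).
Qed.

Lemma mtdeg_mvar (j : 'I_n) : mtdeg (mvar j) = 1%N.
Proof.
rewrite /mtdeg (bigD1 j) //= big1 ?tnth_mktuple ?eqxx // => i /negbTE.
by rewrite tnth_mktuple eq_sym => ->.
Qed.

Lemma mtdeg_eq0 x : (mtdeg x == 0%N) = (x == mzero n).
Proof.
rewrite /mtdeg sum_nat_eq0; apply/forallP/eqP => [x0|-> i]; last by rewrite tnth_mktuple.
by mon_eq; apply/eqP/x0.
Qed.

Lemma exists_mvar_factor x : (0 < mtdeg x)%N -> exists2 j, (0 < tnth x j)%N & x = madd (mvar j) (msub x (mvar j)).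
Proof.
move=> pos_x; have [/existsP [j pos_j] | ] := boolP [exists j, 0 < tnth x j]%N.
  by exists j; rewrite ?msubK ?mvar_mdvd.
rewrite negb_exists => /forallP x0; move: pos_x; rewrite lt0n mtdeg_eq0.
case/eqP; apply: eq_from_tnth => i.
by move: (x0 i); rewrite tnth_mktuple lt0n negbK => /eqP.
Qed.

Lemma madd0m x : madd (mzero n) x = x.
Proof. by mon_eq. Qed.

End Monomials.

Section Support.
Variables (K : fieldType) (n : nat).
Implicit Types (p q : mpoly K n) (m w : mon n).

Lemma nth_mon m (i : 'I_n) : nth 0%N m i = tnth m i.
Proof. by rewrite (tnth_nth 0%N). Qed.

Lemma mcoefE p m : mcoef p m = mcoef_fn p (nth 0%N m).
Proof. exact: mcoef_seqE. Qed.

Lemma mcoefB p q m : mcoef (p - q) m = mcoef p m - mcoef q m.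
Proof. by rewrite !mcoefE mcoef_fnD mcoef_fnN. Qed.

Lemma mcoef_mconstM c p m : mcoef (mconst n c * p) m = c * mcoef p m.
Proof. by rewrite !mcoefE mcoef_fn_mconstM. Qed.

Lemma fn_dvd_mdvd m m' : fn_dvd n (nth 0%N m) (nth 0%N m') = mdvd m m'.
Proof.
apply/allP/mdvdP => [le_mm' i | le_mm' i].
  by rewrite -!nth_mon; apply: le_mm'; rewrite mem_iota add0n ltn_ord.
by rewrite mem_iota add0n /= => lt_in; have := le_mm' (Ordinal lt_in); rewrite -!nth_mon.
Qed.

Lemma mcoef_mmonoM w p m :
  mcoef (mmono K w * p) m = if mdvd w m then mcoef p (msub m w) else 0.
Proof.
rewrite !mcoefE /mmono mmono_seqE mcoef_fn_mmonoM fn_dvd_mdvd.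
case: ifP => // _; apply: mcoef_fn_ext => i lt_in.
by rewrite (_ : i = Ordinal lt_in) // !nth_mon tnth_mktuple.
Qed.

Lemma mcoef1 m : mcoef (1 : mpoly K n) m = (m == mzero n)%:R.
Proof.
rewrite mcoefE mcoef_fn1; case: allP => [m0 | nm0]; case: eqP => //.
  by case; apply: eq_from_tnth => i; rewrite tnth_mktuple -nth_mon;
    apply/eqP/m0; rewrite mem_iota add0n ltn_ord.
move=> m_eq0; case: nm0 => i; rewrite mem_iota add0n /= => lt_in.
by rewrite (_ : i = Ordinal lt_in) // nth_mon m_eq0 tnth_mktuple.
Qed.

Lemma mcoef_mmono w m : mcoef (mmono K w) m = (m == w)%:R.
Proof.
rewrite -[mmono K w]mulr1 mcoef_mmonoM mcoef1.
case: ifP => [dvd_wm | ndvd_wm].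
  have -> // : (msub m w == mzero n) = (m == w).
  apply/eqP/eqP => [m0 | ->]; last by mon_eq; rewrite subnn.
  by rewrite -(msubK dvd_wm) m0 maddC madd0m.
by case: eqP ndvd_wm => // -> /mdvdP []. 
Qed.

Lemma mcoef_mmonoM_madd w p t : mcoef (mmono K w * p) (madd w t) = mcoef p t.
Proof. by rewrite mcoef_mmonoM mdvd_maddr maddKm. Qed.

Lemma in_supp_mmono w m : in_supp (mmono K w) m <-> m = w.
Proof.
rewrite /in_supp mcoef_mmono; have [->|ne_mw] := eqVneq m w; first by rewrite oner_eq0.
by rewrite eqxx; split=> // eq_mw; case/eqP: ne_mw.
Qed.

Lemma in_supp_mmonoM w p m :
  in_supp (mmono K w * p) m -> mdvd w m /\ in_supp p (msub m w).
Proof. by rewrite /in_supp mcoef_mmonoM; case: ifP; rewrite ?eqxx. Qed.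

Lemma in_suppB p q m : in_supp (p - q) m -> in_supp p m \/ in_supp q m.
Proof.
rewrite /in_supp mcoefB; have [->|] := eqVneq (mcoef p m) 0; last by left.
by rewrite sub0r oppr_eq0; right.
Qed.

Lemma in_supp_mconstM c p m : in_supp (mconst n c * p) m -> in_supp p m.
Proof. by rewrite /in_supp mcoef_mconstM mulf_eq0 negb_or => /andP []. Qed.

Lemma in_supp_neq0 p m : in_supp p m -> p != 0.
Proof.
by apply: contraTneq => ->; rewrite /in_supp mcoefE mcoef_fn0 eqxx.
Qed.

Lemma in_supp_finite p : exists s : seq (mon n), forall m, in_supp p m -> m \in s.
Proof.
exists [seq [tuple nth 0%N s i | i < n] | s <- msupp_seq p] => m.
rewrite /in_supp mcoefE => /msupp_seqP [s s_supp eq_s].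
apply/mapP; exists s => //; apply: eq_from_tnth => i.
by rewrite tnth_mktuple eq_s // nth_mon.
Qed.

End Support.

Section MonomialOrder.
Variables (n : nat) (lt : rel (mon n)).
Hypothesis lt_mono : monomial_order lt.
Implicit Types (x y z t w : mon n).

Definition mle x y := x = y \/ lt x y.

Lemma lt_irr x : ~ lt x x.
Proof. by case: lt_mono => irr _ _ _ _; rewrite irr. Qed.

Lemma lt_trans x y z : lt x y -> lt y z -> lt x z.
Proof. by case: lt_mono => _ tr _ _ _; apply: tr. Qed.

Lemma lt_asym x y : lt x y -> ~ lt y x.
Proof. by move=> lt_xy /(lt_trans lt_xy); apply: lt_irr. Qed.

Lemma lt_neq x y : lt x y -> x != y.
Proof. by move=> lt_xy; apply/eqP => eq_xy; move: lt_xy; rewrite eq_xy; apply: lt_irr. Qed.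

Lemma lt_total x y : x <> y -> lt x y \/ lt y x.
Proof. by case: lt_mono => _ _ tot _ _ /eqP/tot/orP. Qed.

Lemma lt_wf : well_founded (fun x y => lt x y).
Proof. by case: lt_mono. Qed.

Lemma lt_maddr z x y : lt x y -> lt (madd x z) (madd y z).
Proof. by case: lt_mono => _ _ _ mul _; apply: mul. Qed.

Lemma lt_maddl z x y : lt x y -> lt (madd z x) (madd z y).
Proof. by rewrite ![madd z _]maddC; apply: lt_maddr. Qed.

Lemma lt_madd2r z x y : lt (madd x z) (madd y z) -> lt x y.
Proof.
move=> lt_xzyz; have [eq_xy|] := eqVneq x y; first by rewrite eq_xy in lt_xzyz; case: (lt_irr lt_xzyz).
by move/eqP/lt_total => [//|/(lt_maddr z)/(lt_asym lt_xzyz)].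
Qed.

Lemma mle_lt_trans x y z : mle x y -> lt y z -> lt x z.
Proof. by case=> [->|lt_xy /(lt_trans lt_xy)]. Qed.

Lemma lt_mle_trans x y z : lt x y -> mle y z -> lt x z.
Proof. by move=> lt_xy [<-|/(lt_trans lt_xy)]. Qed.

Lemma mle_maddl z x y : mle x y -> mle (madd z x) (madd z y).
Proof. by case=> [->|/(lt_maddl z)]; [left|right]. Qed.

Lemma lt_mle_madd x y z t : lt x y -> mle z t -> lt (madd x z) (madd y t).
Proof. by move=> /(lt_maddr z) lt_xzyz /(mle_maddl y); apply: lt_mle_trans. Qed.

Lemma seq_max (s : seq (mon n)) : s != [::] ->
  exists2 u, u \in s & forall m, m \in s -> mle m u.
Proof.
elim: s => [//|y [|z s] IH] _.
  by exists y => [|m]; rewrite ?inE // => /eqP ->; left.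
have [u su max_u] := IH isT.
have [->|/eqP/lt_total [lt_yu|lt_uy]] := eqVneq y u.
- by exists u => [|m]; rewrite inE ?eqxx // => /predU1P [->|/max_u]; first left.
- by exists u => [|m]; rewrite inE ?su ?orbT // => /predU1P [->|/max_u //]; right.
- exists y => [|m]; rewrite inE ?eqxx // => /predU1P [->|/max_u]; first by left.
  by right; apply: mle_lt_trans lt_uy.
Qed.

Variable K : fieldType.
Implicit Types (p g : mpoly K n).

Lemma lead_mon_exists p m : in_supp p m -> exists u, lead_mon lt p u.
Proof.
move=> supp_m; have [s supp_s] := in_supp_finite p.
have s_m : m \in [seq x <- s | mcoef p x != 0] by rewrite mem_filter supp_m supp_s.
case: (@seq_max [seq x <- s | mcoef p x != 0]) => [|u]; first by apply: contraTneq s_m => ->.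
by rewrite mem_filter => /andP [supp_u _] max_u; exists u; split=> // x supp_x;
  apply: max_u; rewrite mem_filter supp_x supp_s.
Qed.

Lemma in_supp_mmonoM_mle w g t0 m : lead_mon lt g t0 ->
  in_supp (mmono K w * g) m -> mle m (madd w t0).
Proof.
move=> [_ max_g0] /in_supp_mmonoM [dvd_wm /max_g0 le_g0].
by rewrite -(msubK dvd_wm); apply: mle_maddl.
Qed.

Lemma reduce_lt p g u t0 m : lead_mon lt p u -> lead_mon lt g t0 -> mcoef g t0 = 1 ->
  mdvd t0 u ->
  in_supp (p - mconst n (mcoef p u) * (mmono K (msub u t0) * g)) m -> lt m u.
Proof.
move=> lead_u lead_t0 t0_1 dvd_t0u supp_m.
have eq_u : madd (msub u t0) t0 = u by rewrite maddC msubK.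
have [eq_mu|ne_mu] := eqVneq m u.
  have coef_u : mcoef (mmono K (msub u t0) * g) u = 1.
    by rewrite -{2}eq_u mcoef_mmonoM_madd.
  by move: supp_m; rewrite /in_supp eq_mu mcoefB mcoef_mconstM coef_u mulr1 subrr eqxx.
case/in_suppB: supp_m => [/lead_u.2 | /in_supp_mconstM/(in_supp_mmonoM_mle lead_t0)];
  rewrite ?eq_u; by case=> // /eqP; rewrite (negbTE ne_mu).
Qed.

End MonomialOrder.

Section Ideals.
Variables (K : fieldType) (n : nat) (I : mpoly K n -> Prop).
Hypothesis I_ideal : is_ideal I.

Lemma idealMl q p : I p -> I (q * p).
Proof. by case: I_ideal => _ _; apply. Qed.

Lemma idealB p q : I p -> I q -> I (p - q).
Proof. by move=> Ip Iq; case: I_ideal => _ addI _; apply: addI; rewrite // -mulN1r; apply: idealMl. Qed.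

End Ideals.

Section MinimalNonfaces.
Variables (n : nat) (D : {set {set 'I_n}}).
Hypotheses (D_complex : simplicial_complex D) (D_vertices : all_vertices D).
Implicit Types (G H : {set 'I_n}).

Lemma small_in_complex G : (#|G| <= 1)%N -> G \in D.
Proof.
case: D_complex => D0 _; rewrite leq_eqVlt ltnS leqn0.
by case/orP => [/cards1P [x ->] | /eqP/cards0_eq ->] //; apply: D_vertices.
Qed.

Lemma min_nonface_card G : min_nonface D G -> (2 <= #|G|)%N.
Proof.
by case=> nDG _; rewrite ltnNge; apply: contra nDG => /small_in_complex.
Qed.

Lemma min_nonface_pair (x y : 'I_n) : x != y -> [set x; y] \notin D ->
  min_nonface D [set x; y].
Proof.
move=> ne_xy nD; split=> // G /proper_card.
by rewrite cards2 ne_xy ltnS => /small_in_complex.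
Qed.

End MinimalNonfaces.

Section ReducedGroebnerBasis.
Variables (K : fieldType) (n : nat) (n0 : (0 < n)%N) (D : {set {set 'I_n}}) (r : nat)
  (lt : rel (mon n)) (I : mpoly K n -> Prop) (f : {set 'I_n} -> mpoly K n)
  (dF : {set 'I_n} -> nat).
Let v1 : 'I_n := Ordinal n0.
Hypotheses (D_complex : simplicial_complex D) (D_vertices : all_vertices D)
  (lt_mono : monomial_order lt) (I_ideal : is_ideal I)
  (x1_max : forall i : 'I_n, i != v1 -> lt (mvar i) (mvar v1))
  (f_GB : forall F, min_nonface D F ->
     [/\ I (f F), homogeneous (dF F) (f F), lead_mon lt (f F) (mset F),
         mcoef (f F) (mset F) = 1
       & forall m, in_supp (f F) m -> m != mset F -> ~ init_ideal lt I (mmono K m)])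
  (init_I : forall p, init_ideal lt I p <->
     mono_ideal (fun m => exists2 F, min_nonface D F & m = mset F) p).
Implicit Types (G H : {set 'I_n}) (m t u w : mon n) (p : mpoly K n).

Definition standard m := forall G, min_nonface D G -> ~~ mdvd (mset G) m.

Lemma f_in_ideal G : min_nonface D G -> I (f G).
Proof. by case/f_GB. Qed.

Lemma f_lead G : min_nonface D G -> lead_mon lt (f G) (mset G).
Proof. by case/f_GB. Qed.

Lemma f_lead_coef G : min_nonface D G -> mcoef (f G) (mset G) = 1.
Proof. by case/f_GB. Qed.

Lemma f_mtdeg G t : min_nonface D G -> in_supp (f G) t -> mtdeg t = #|G|.
Proof.
by case/f_GB => _ homog [lead _] _ _ /homog ->; rewrite -(homog _ lead) mtdeg_mset.
Qed.

Lemma dF_card G : min_nonface D G -> dF G = #|G|.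
Proof. by case/f_GB => _ homog [lead _] _ _; rewrite -(homog _ lead) mtdeg_mset. Qed.

Lemma f_tail_standard G t : min_nonface D G -> in_supp (f G) t -> t <> mset G ->
  standard t.
Proof.
move=> G_mnf supp_t /eqP ne_t H H_mnf; apply/negP => dvd_Ht.
case/f_GB: G_mnf => _ _ _ _ /(_ t supp_t ne_t); apply; apply/init_I => m.
by move/in_supp_mmono ->; exists (mset H) => //; exists H.
Qed.

Lemma lead_nonstandard p u : I p -> lead_mon lt p u ->
  exists2 G, min_nonface D G & mdvd (mset G) u.
Proof.
move=> Ip lead_u; have /init_I : init_ideal lt I (mmono K u).
  move=> m /in_supp_mmono ->; exists u; last by apply/mdvdP.
  by exists p => //; split=> //; apply: in_supp_neq0 lead_u.1.
by case/(_ u (iffRL (in_supp_mmono K u u) erefl)) => _ [G G_mnf ->]; exists G.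
Qed.

Definition x1pow k : mon n := [tuple ((j == v1) * k)%N | j < n].

Lemma mvar_v1 : mvar v1 = x1pow 1.
Proof. by mon_eq; rewrite muln1 eq_sym. Qed.

Lemma x1powD k l : madd (x1pow k) (x1pow l) = x1pow (k + l).
Proof. by mon_eq; rewrite mulnDr. Qed.

Lemma x1pow0 : x1pow 0 = mzero n.
Proof. by mon_eq; rewrite muln0. Qed.

Lemma mtdeg_x1pow k : mtdeg (x1pow k) = k.
Proof.
rewrite /mtdeg (bigD1 v1) //= big1 ?tnth_mktuple ?eqxx ?mul1n ?addn0 // => i.
by rewrite tnth_mktuple => /negbTE ->.
Qed.

Lemma mle_x1pow k w : tnth w v1 = 0%N -> mtdeg w = k -> mle lt w (x1pow k).
Proof.
elim: k w => [|k IH] w w_v1 deg_w.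
  by left; apply/eqP; rewrite x1pow0 -mtdeg_eq0 deg_w.
have [j pos_j ->] := exists_mvar_factor (ltac:(by rewrite deg_w) : (0 < mtdeg w)%N).
have j_ne_v1 : j != v1 by apply: contraTneq pos_j => ->; rewrite w_v1.
right; rewrite -addn1 -x1powD -mvar_v1 [madd (x1pow _) _]maddC.
apply: (lt_mle_madd lt_mono (x1_max j_ne_v1)); apply: IH; first by rewrite tnth_mktuple w_v1.
by rewrite mtdeg_msub ?mvar_mdvd ?deg_w ?mtdeg_mvar ?subn1.
Qed.

Lemma lt_x1pow k w : tnth w v1 = 0%N -> mtdeg w = k.+1 -> lt w (x1pow k.+1).
Proof.
move=> w_v1 /(mle_x1pow w_v1) [eq_w|//].
by move: w_v1; rewrite eq_w tnth_mktuple eqxx.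
Qed.

Lemma tnth_mset G i : tnth (mset G) i = (i \in G).
Proof. by rewrite tnth_mktuple. Qed.

Lemma mset_lt_x1pow G : (2 <= #|G|)%N -> lt (mset G) (x1pow #|G|).
Proof.
have [v1G | v1nG] := boolP (v1 \in G); last first.
  by case: #|G| (mtdeg_mset G) => // k deg_G _; apply: lt_x1pow; rewrite ?tnth_mset ?(negbTE v1nG).
rewrite (mset_D1 v1G) (cardsD1 v1 G) v1G mvar_v1 -x1powD add1n ltnS.
case: #|G :\ v1| (mtdeg_mset (G :\ v1)) => // k deg_G _.
by apply/(lt_maddl lt_mono)/lt_x1pow; rewrite ?tnth_mset ?setD11.
Qed.

Lemma x1pow_mvar_of_deg m k : mtdeg m = k.+1 -> (k <= tnth m v1)%N ->
  exists j, m = madd (x1pow k) (mvar j).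
Proof.
move=> deg_m le_k.
have dvd_m : mdvd (x1pow k) m.
  by apply/mdvdP => i; rewrite tnth_mktuple; case: eqP => [->|_]; rewrite ?mul1n.
have deg_rest : mtdeg (msub m (x1pow k)) = 1%N by rewrite mtdeg_msub // deg_m mtdeg_x1pow subSnn.
have [j pos_j eq_rest] := exists_mvar_factor (ltac:(by rewrite deg_rest) : (0 < mtdeg (msub m (x1pow k)))%N).
have rest0 : msub (msub m (x1pow k)) (mvar j) = mzero n.
  by apply/eqP; rewrite -mtdeg_eq0 mtdeg_msub ?mvar_mdvd // deg_rest mtdeg_mvar.
by exists j; rewrite -(msubK dvd_m) eq_rest rest0 [madd (mvar j) _]maddC madd0m.
Qed.

Lemma x1pow_of_support t : (forall i, i != v1 -> tnth t i = 0%N) -> t = x1pow (mtdeg t).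
Proof.
move=> t0; suff eq_t : t = x1pow (tnth t v1) by rewrite {2}eq_t mtdeg_x1pow.
apply: eq_from_tnth => i; rewrite tnth_mktuple.
by have [->|/t0 ->] := eqVneq i v1; rewrite ?mul1n.
Qed.

Lemma f_tail_x1pow_mvar G t k j : min_nonface D G -> in_supp (f G) t -> t <> mset G ->
  mdvd t (madd (x1pow k) (mvar j)) ->
  [/\ j != v1, [set v1; j] \in D & t = madd (x1pow #|G|.-1) (mvar j)].
Proof.
move=> G_mnf supp_t ne_t /mdvdP dvd_t.
have deg_t := f_mtdeg G_mnf supp_t; have G2 := min_nonface_card D_complex D_vertices G_mnf.
have t_out i : i != v1 -> i != j -> tnth t i = 0%N.
  by move=> /negbTE i_v1 /negbTE i_j; move: (dvd_t i); rewrite !tnth_mktuple i_v1 eq_sym i_j leqn0 => /eqP.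
have [/andP [j_ne_v1 pos_j] | no_j] := boolP ((j != v1) && (0 < tnth t j)%N); last first.
  have /x1pow_of_support eq_t : forall i, i != v1 -> tnth t i = 0%N.
    move=> i i_ne_v1; have [eq_ij|] := eqVneq i j; last exact: t_out.
    by move: no_j; rewrite -eq_ij i_ne_v1 lt0n negbK => /eqP.
  have lt_tG : lt t (mset G) by case: ((f_lead G_mnf).2 _ supp_t).
  by case: (lt_asym lt_mono lt_tG); rewrite eq_t deg_t; apply: mset_lt_x1pow.
have /x1pow_of_support eq_rest : forall i, i != v1 -> tnth (msub t (mvar j)) i = 0%N.
  move=> i i_ne_v1; rewrite !tnth_mktuple; have [<-|i_ne_j] := eqVneq j i; last first.
    by rewrite t_out // eq_sym.
  by move: (dvd_t j); rewrite !tnth_mktuple (negbTE j_ne_v1) eqxx => /(leq_sub2r 1%N); rewrite subnn leqn0 => /eqP.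
have eq_t : t = madd (x1pow #|G|.-1) (mvar j).
  rewrite -(msubK (mvar_mdvd pos_j)) maddC eq_rest; congr (madd (x1pow _) _).
  by rewrite mtdeg_msub ?mvar_mdvd // deg_t mtdeg_mvar subn1.
split=> //; apply: contraT => nD.
have /negP[] := f_tail_standard G_mnf supp_t ne_t (min_nonface_pair D_complex D_vertices
  (ltac:(by rewrite eq_sym) : v1 != j) nD).
apply/mdvdP => i; rewrite eq_t !tnth_mktuple in_set2.
have [->|_] := eqVneq i v1; last by rewrite mul0n /= eq_sym.
by rewrite (negbTE j_ne_v1) mul1n addn0 -ltnS prednK // ltnW.
Qed.

Lemma standard_of_tail G t m k : min_nonface D G -> in_supp (f G) t -> t <> mset G ->
  mdvd t m -> mtdeg m = k.+1 -> (k <= tnth m v1)%N -> standard m.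
Proof.
move=> G_mnf supp_t ne_t dvd_tm deg_m le_k; have [j eq_m] := x1pow_mvar_of_deg deg_m le_k.
have dvd_t : mdvd t (madd (x1pow k) (mvar j)) by rewrite -eq_m.
have [j_ne_v1 v1j_D _] := f_tail_x1pow_mvar G_mnf supp_t ne_t dvd_t.
move=> H H_mnf; apply/mdvdP => dvd_Hm.
have sub_H : H \subset [set v1; j].
  apply/subsetP => x xH; move: (dvd_Hm x); rewrite eq_m !tnth_mktuple xH in_set2.
  have [//|_] := eqVneq x v1.
  by rewrite mul0n add0n eq_sym; case: (x == j).
have eq_H : H = [set v1; j].
  apply/eqP; rewrite eqEcard sub_H cards2 eq_sym j_ne_v1 /=.
  by have := min_nonface_card D_complex D_vertices H_mnf.
by case: H_mnf; rewrite eq_H v1j_D.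
Qed.

Lemma shifted_tail_props G w m k : min_nonface D G -> in_supp (mmono K w * f G) m ->
  m != madd w (mset G) -> mtdeg (madd w (mset G)) = k.+1 ->
  [/\ lt m (madd w (mset G)), mtdeg m = k.+1 & (k <= tnth m v1)%N -> standard m].
Proof.
move=> G_mnf supp_m ne_m deg_lead.
have [dvd_wm supp_t] := in_supp_mmonoM supp_m.
have ne_t : msub m w <> mset G by move=> eq_t; case/eqP: ne_m; rewrite -eq_t msubK.
have deg_m : mtdeg m = k.+1.
  by rewrite -(msubK dvd_wm) mtdegD (f_mtdeg G_mnf supp_t) -mtdeg_mset -mtdegD.
split=> //; last exact: standard_of_tail G_mnf supp_t ne_t (msub_mdvd _ _) deg_m.
by case: (in_supp_mmonoM_mle lt_mono (f_lead G_mnf) supp_m) => // /eqP; rewrite (negbTE ne_m).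
Qed.

Variable a : 'I_n.
Hypotheses (link_v1 : forall v : 'I_n, [set v] \in link D v1 <-> (1 <= v < r)%N)
  (x_chain : forall i j : 'I_n, (1 <= i)%N -> (i < j)%N -> (j < r)%N -> lt (mvar j) (mvar i))
  (a_range : (1 < a.+1 <= minn r 3)%N).

Definition target k := madd (x1pow k.-1) (mvar a).

Lemma target_dF G : min_nonface D G ->
  [tuple ((j == v1) * (dF G).-1 + (j == a))%N | j < n] = target #|G|.
Proof. by move=> G_mnf; mon_eq; rewrite (dF_card G_mnf) [a == _]eq_sym. Qed.

Lemma a_ne_v1 : a != v1.
Proof. by apply/eqP => eq_a; move: a_range; rewrite eq_a. Qed.

Lemma f_supp_ngt G m : min_nonface D G -> in_supp (f G) m -> ~ lt (mset G) m.
Proof.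
move=> G_mnf /((f_lead G_mnf).2) [->|lt_mG]; first exact: (lt_irr lt_mono).
exact: (lt_asym lt_mono lt_mG).
Qed.

Lemma mset_lt_target H c : v1 \notin H -> c \in H -> mle lt (mvar c) (mvar a) ->
  (2 <= #|H|)%N -> lt (mset H) (target #|H|).
Proof.
move=> v1H cH le_ca; rewrite (mset_D1 cH) /target (cardsD1 c H) cH add1n ltnS maddC.
move=> pos_H; apply: (lt_mle_madd lt_mono _ le_ca); move: pos_H.
case: #|H :\ c| (mtdeg_mset (H :\ c)) => // k deg_H _; apply: lt_x1pow deg_H.
by rewrite tnth_mset in_setD1 (negbTE v1H) andbF.
Qed.

Lemma link_pair x : x != v1 -> [set v1; x] \in D -> (1 <= x < r)%N.
Proof.
by move=> x_ne_v1 v1x_D; apply/link_v1; rewrite inE D_vertices v1x_D in_set1 eq_sym x_ne_v1.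
Qed.

Lemma exists_mvar_le_a H : (forall x, x \in H -> (1 <= x < r)%N) -> (2 <= #|H|)%N ->
  exists2 c, c \in H & mle lt (mvar c) (mvar a).
Proof.
move=> H_range /card_gt1P [x [y [xH yH ne_xy]]].
have [x_range y_range] := (H_range x xH, H_range y yH).
suff [c cH le_ac] : exists2 c, c \in H & (a <= c)%N.
  exists c => //; case: ltngtP le_ac => // [lt_ac | eq_ac] _; last by rewrite (val_inj eq_ac); left.
  by right; apply: x_chain lt_ac _; move: a_range (H_range c cH); lia.
have : (a <= x)%N || (a <= y)%N by move: a_range ne_xy x_range y_range; rewrite -val_eqE /=; lia.
by case/orP; [exists x | exists y].
Qed.

Lemma linked_mset_lt_target H : (forall x, x \in H -> (1 <= x < r)%N) -> (2 <= #|H|)%N ->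
  lt (mset H) (target #|H|).
Proof.
move=> H_range H2; have [c cH le_ca] := exists_mvar_le_a H_range H2.
by apply: mset_lt_target cH le_ca H2; apply/negP => /H_range.
Qed.

Lemma f_target_v1_in G : min_nonface D G -> v1 \in G -> in_supp (f G) (target #|G|) ->
  #|G| = 2%N.
Proof.
move=> G_mnf v1G supp_target; have G2 := min_nonface_card D_complex D_vertices G_mnf.
apply/eqP; rewrite eqn_leq G2 andbT leqNgt; apply/negP => G3.
have card_H : #|G| = (#|G :\ v1|).+1 by rewrite (cardsD1 v1 G) v1G.
have H_range x : x \in G :\ v1 -> (1 <= x < r)%N.
  rewrite in_setD1 => /andP [x_ne_v1 xG]; apply: (link_pair x_ne_v1).
  case: G_mnf => _; apply; rewrite properEcard cards2 eq_sym x_ne_v1 G3 andbT.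
  by apply/subsetP => y /set2P [] ->.
have H2 : (2 <= #|G :\ v1|)%N by move: G3; rewrite card_H.
have target_G : target #|G| = madd (mvar v1) (target #|G :\ v1|).
  by rewrite /target maddA mvar_v1 x1powD card_H add1n prednK // ltnW.
apply: (f_supp_ngt G_mnf supp_target); rewrite target_G (mset_D1 v1G).
exact/(lt_maddl lt_mono)/linked_mset_lt_target.
Qed.

Definition key G := madd (mset G) (x1pow (n - #|G|)).

Definition no_target F := min_nonface D F -> v1 \notin F -> ~ in_supp (f F) (target #|F|).

Section InductionStep.
Variables (F : {set 'I_n}) (b : 'I_n).
Hypotheses (F_mnf : min_nonface D F) (v1_notin_F : v1 \notin F) (a_notin_F : a \notin F)
  (b_in_F : b \in F) (v1b_mnf : min_nonface D [set v1; b])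
  (IH : forall G, lt (key G) (key F) -> no_target G)
  (F_target : in_supp (f F) (target #|F|)).
Let d := #|F|.
Let lcm_F := madd (mvar v1) (mset F).
Let top := madd (x1pow d) (mvar a).

Lemma card_F_ge2 : (2 <= d)%N. Proof. exact: (min_nonface_card D_complex D_vertices F_mnf). Qed.

Lemma top_v1 : tnth top v1 = d.
Proof. by rewrite !tnth_mktuple eqxx (negbTE a_ne_v1) mul1n addn0. Qed.

(* Reduction by the Groebner basis preserves these properties while strictly
   decreasing the leading monomial, so no witness exists. *)
Definition witness p := [/\ I p, in_supp p top, forall m, in_supp p m -> lt m lcm_F,
  forall m, in_supp p m -> mtdeg m = d.+1
  & forall m, in_supp p m -> (d <= tnth m v1)%N -> standard m].

Lemma key_lt G w : min_nonface D G -> v1 \notin G -> madd w (target #|G|) = top ->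
  lt (madd w (mset G)) lcm_F -> lt (key G) (key F).
Proof.
move=> G_mnf v1G eq_top lt_lcm; have G2 := min_nonface_card D_complex D_vertices G_mnf.
have le_Gd : (#|G| <= d.+1)%N.
  by move: (congr1 (fun m => tnth m v1) eq_top); rewrite top_v1 !tnth_mktuple eqxx (negbTE a_ne_v1); lia.
have card_le_n (H : {set 'I_n}) : (#|H| <= n)%N by rewrite -[X in (_ <= X)%N]card_ord max_card.
have [le_dn le_Gn] := (card_le_n F, card_le_n G).
have eq_w : w = x1pow (d.+1 - #|G|).
  apply: eq_from_tnth => i; move: (congr1 (fun m => tnth m i) eq_top); rewrite !tnth_mktuple.
  by case: (i == v1); rewrite ?mul1n ?mul0n; lia.
apply: (lt_madd2r lt_mono (z := x1pow 1)).
have -> : madd (key G) (x1pow 1) = madd (madd w (mset G)) (x1pow (n - d)).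
  by rewrite eq_w; mon_eq; case: (_ == v1); rewrite ?mul1n ?mul0n; lia.
have -> : madd (key F) (x1pow 1) = madd lcm_F (x1pow (n - d)).
  by mon_eq; rewrite [v1 == _]eq_sym; case: (_ == v1); rewrite ?mul1n ?mul0n; lia.
exact: lt_maddr.
Qed.

Lemma reducer_misses_top p u G : witness p -> lead_mon lt p u -> min_nonface D G ->
  mdvd (mset G) u -> ~ in_supp (mmono K (msub u (mset G)) * f G) top.
Proof.
move=> [Ip _ lt_lcm _ std_p] lead_u G_mnf dvd_Gu; set w := msub u (mset G).
have eq_u : madd w (mset G) = u by rewrite maddC msubK.
have u_v1 : (tnth u v1 < d)%N.
  by rewrite ltnNge; apply/negP => /(std_p u lead_u.1)/(_ G G_mnf); rewrite dvd_Gu.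
case/in_supp_mmonoM => dvd_w; set t := msub top w => supp_t.
have eq_top : madd w t = top by rewrite msubK.
have [eq_t|/eqP ne_t] := eqVneq t (mset G).
  by move: u_v1; rewrite -eq_u -eq_t eq_top top_v1 ltnn.
have [_ _ t_target] := f_tail_x1pow_mvar G_mnf supp_t ne_t (msub_mdvd top w).
have {}supp_t : in_supp (f G) (target #|G|) by rewrite /target -t_target.
have [v1G | v1nG] := boolP (v1 \in G).
  move: u_v1 (congr1 (fun m => tnth m v1) eq_top); rewrite -eq_u t_target top_v1.
  rewrite !tnth_mktuple v1G eqxx (negbTE a_ne_v1) (f_target_v1_in G_mnf v1G supp_t).
  by rewrite mul1n !addn0; lia.
apply: (IH _ G_mnf v1nG supp_t); apply: (key_lt (w := w) G_mnf v1nG); first by rewrite /target -t_target.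
by rewrite eq_u; apply: lt_lcm lead_u.1.
Qed.

Lemma witness_reduce p u : witness p -> lead_mon lt p u ->
  exists p' u', [/\ witness p', lead_mon lt p' u' & lt u' u].
Proof.
move=> wit_p lead_u; have [Ip supp_top lt_lcm deg_p std_p] := wit_p.
have [G G_mnf dvd_Gu] := lead_nonstandard Ip lead_u.
set w := msub u (mset G); set p' := p - mconst n (mcoef p u) * (mmono K w * f G).
have eq_u : madd w (mset G) = u by rewrite maddC msubK.
have lt_u m : in_supp p' m -> lt m u.
  exact: (reduce_lt lt_mono lead_u (f_lead G_mnf) (f_lead_coef G_mnf) dvd_Gu).
have supp_p' m : in_supp p' m ->
    in_supp p m \/ mtdeg m = d.+1 /\ ((d <= tnth m v1)%N -> standard m).
  move=> supp'_m; case/in_suppB: (supp'_m) => [|/in_supp_mconstM supp_m]; first by left.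
  have ne_m : m != madd w (mset G) by rewrite eq_u; apply: (lt_neq lt_mono (lt_u m supp'_m)).
  have deg_u : mtdeg (madd w (mset G)) = d.+1 by rewrite eq_u (deg_p _ lead_u.1).
  by have [] := shifted_tail_props G_mnf supp_m ne_m deg_u; right.
have supp_top' : in_supp p' top.
  have /negP := reducer_misses_top wit_p lead_u G_mnf dvd_Gu; rewrite negbK => /eqP coef0.
  by rewrite /in_supp mcoefB mcoef_mconstM coef0 mulr0 subr0.
have [u' lead_u'] := lead_mon_exists lt_mono supp_top'.
exists p', u'; split=> //; last exact: lt_u lead_u'.1.
split=> //.
- by apply: (idealB I_ideal Ip); apply/(idealMl I_ideal)/(idealMl I_ideal)/f_in_ideal.
- by move=> m /lt_u lt_mu; apply: (lt_trans lt_mono lt_mu); apply: lt_lcm lead_u.1.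
- by move=> m /supp_p' [/deg_p | []].
- by move=> m /supp_p' [/std_p | []].
Qed.

Lemma no_witness p : ~ witness p.
Proof.
move=> wit_p; have [u lead_u] := lead_mon_exists lt_mono (let: And5 _ supp _ _ _ := wit_p in supp).
elim/(well_founded_ind (lt_wf lt_mono)): u p wit_p lead_u => u IHu p wit_p lead_u.
by have [p' [u' [wit_p' lead_u' lt_u'u]]] := witness_reduce wit_p lead_u; apply: IHu lt_u'u _ wit_p' lead_u'.
Qed.

Lemma spoly_witness :
  witness (mmono K (mvar v1) * f F - mmono K (mset (F :\ b)) * f [set v1; b]).
Proof.
have b_ne_v1 : b != v1 by apply: contraNneq v1_notin_F => <-.
have eq_lcm : madd (mset (F :\ b)) (mset [set v1; b]) = lcm_F.
  mon_eq; rewrite in_setD1 in_set2 [v1 == _]eq_sym.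
  have [->|_] := eqVneq _ v1; first by rewrite (negbTE v1_notin_F) andbF.
  by have [->|] := eqVneq _ b; rewrite ?b_in_F //= addn0.
have coef_lcm : mcoef (mmono K (mvar v1) * f F - mmono K (mset (F :\ b)) * f [set v1; b]) lcm_F = 0.
  rewrite mcoefB mcoef_mmonoM_madd -[in X in _ - X]eq_lcm mcoef_mmonoM_madd.
  by rewrite !f_lead_coef ?subrr.
have top_eq : top = madd (mvar v1) (target d).
  by rewrite /target maddA mvar_v1 x1powD add1n prednK // ltnW // card_F_ge2.
have [c cFb] : exists c, c \in F :\ b by apply/card_gt0P; move: card_F_ge2; rewrite /d (cardsD1 b F) b_in_F.
have ndvd_top : ~~ mdvd (mset (F :\ b)) top.
  move: cFb; rewrite in_setD1 => /andP [c_ne_b cF].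
  have c_ne_v1 : c != v1 by apply: contraNneq v1_notin_F => <-.
  have a_ne_c : a != c by apply: contraNneq a_notin_F => ->.
  apply/mdvdP => /(_ c); rewrite !tnth_mktuple in_setD1 c_ne_b cF.
  by rewrite (negbTE c_ne_v1) (negbTE a_ne_c).
have deg_lcm : mtdeg lcm_F = d.+1 by rewrite mtdegD mtdeg_mvar mtdeg_mset.
have supp_p0 m : in_supp (mmono K (mvar v1) * f F - mmono K (mset (F :\ b)) * f [set v1; b]) m ->
    [/\ lt m lcm_F, mtdeg m = d.+1 & (d <= tnth m v1)%N -> standard m].
  move=> supp_m; have ne_m : m != lcm_F by apply: contraTneq supp_m => ->; rewrite /in_supp coef_lcm eqxx.
  case/in_suppB: supp_m => [|] supp_m; first exact: shifted_tail_props F_mnf supp_m ne_m deg_lcm.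
  by rewrite -eq_lcm in ne_m deg_lcm *; apply: shifted_tail_props v1b_mnf supp_m ne_m deg_lcm.
split.
- by apply: (idealB I_ideal); apply/(idealMl I_ideal)/f_in_ideal.
- rewrite /in_supp mcoefB [in X in _ - X]mcoef_mmonoM (negbTE ndvd_top) subr0.
  by rewrite top_eq mcoef_mmonoM_madd.
- by move=> m /supp_p0 [].
- by move=> m /supp_p0 [].
- by move=> m /supp_p0 [].
Qed.

Lemma induction_step_absurd : False.
Proof. exact: no_witness spoly_witness. Qed.

End InductionStep.

Lemma no_target_step F : (forall G, lt (key G) (key F) -> no_target G) -> no_target F.
Proof.
move=> IH F_mnf v1_notin_F F_target.
have F2 := min_nonface_card D_complex D_vertices F_mnf.
have a_notin_F : a \notin F.
  apply/negP => a_in_F; apply: (f_supp_ngt F_mnf F_target).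
  by apply: (mset_lt_target v1_notin_F a_in_F) => //; left.
have [b b_in_F b_unlinked] : exists2 b, b \in F & ~~ (1 <= b < r)%N.
  have [/exists_inP [b b_in_F b_unlinked] | ] := boolP [exists x in F, ~~ (1 <= x < r)%N].
    by exists b.
  rewrite negb_exists_in => /forall_inP F_linked; case: (f_supp_ngt F_mnf F_target).
  by apply: linked_mset_lt_target F2 => x /F_linked; rewrite negbK.
have b_ne_v1 : b != v1 by apply: contraNneq v1_notin_F => <-.
have v1b_mnf : min_nonface D [set v1; b].
  apply: (min_nonface_pair D_complex D_vertices); first by rewrite eq_sym.
  by apply: contra b_unlinked; apply: link_pair.
exact: (induction_step_absurd F_mnf v1_notin_F a_notin_F b_in_F v1b_mnf IH F_target).
Qed.

Lemma no_target_all F : no_target F.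
Proof.
move: {2}(key F) (erefl (key F)) => k; elim/(well_founded_ind (lt_wf lt_mono)): k F.
by move=> k IHk F key_F; apply: no_target_step => G; rewrite key_F => /IHk; apply.
Qed.
End ReducedGroebnerBasis.

(* Vertex k of the paper (k in [n]) is the ordinal k-1 : 'I_n; variable x_k is
   mvar (k-1). In particular vertex 1 is v1 = Ordinal n0. *)
Theorem lemma4p7 (K : fieldType) (n : nat) (n0 : (0 < n)%N)
  (D : {set {set 'I_n}}) (r : nat) (lt : rel (mon n))
  (I : mpoly K n -> Prop) (f : {set 'I_n} -> mpoly K n) (dF : {set 'I_n} -> nat) :
  let v1 : 'I_n := Ordinal n0 in
  simplicial_complex D -> one_dimensional D -> all_vertices D ->
  (r <= n)%N ->
  (* link_D 1 = {2,...,r} as a set of vertices *)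
  (forall v : 'I_n, [set v] \in link D v1 <-> (1 <= v < r)%N) ->
  monomial_order lt ->
  (* x_1 > x_i for all i > 1 *)
  (forall i : 'I_n, i != v1 -> lt (mvar i) (mvar v1)) ->
  (* x_2 > x_3 > ... > x_r *)
  (forall i j : 'I_n, (1 <= i)%N -> (i < j)%N -> (j < r)%N -> lt (mvar j) (mvar i)) ->
  homogeneous_ideal I ->
  (* in_tau(I) = I_Delta *)
  (forall p, init_ideal lt I p <-> @SR_ideal K n D p) ->
  (* {f_F : F minimal non-face} is a reduced homogeneous Groebner basis of I,
     with in_tau(f_F) = x_F and deg f_F = d_F *)
  (forall F, min_nonface D F ->
     [/\ I (f F), homogeneous (dF F) (f F), lead_mon lt (f F) (mset F),
         mcoef (f F) (mset F) = 1
       & forall m, in_supp (f F) m -> m != mset F -> ~ init_ideal lt I (mmono K m)]) ->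
  (forall p, init_ideal lt I p <->
     mono_ideal (fun m => exists2 F, min_nonface D F & m = mset F) p) ->
  forall (a : 'I_n) (F : {set 'I_n}),
    (1 < a.+1 <= minn r 3)%N -> min_nonface D F -> v1 \notin F ->
    ~ in_supp (f F) [tuple ((j == v1) * (dF F).-1 + (j == a))%N | j < n].
Proof.
move=> v1 D_complex _ D_vertices _ link_v1 lt_mono x1_max x_chain [I_ideal _] _ f_GB init_I
  a F a_range F_mnf v1_notin_F.
rewrite (target_dF n0 f_GB a F_mnf).
exact: (no_target_all D_complex D_vertices lt_mono I_ideal x1_max f_GB init_I link_v1 x_chain
  a_range F_mnf v1_notin_F).
Qed.
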